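(* Let $v\ge 2$ be an integer and $\theta\in[0,1]$. In the tipsy cop and drunken robber game on the complete graph $K_v$ with cop and robber starting at distinct vertices, let $X$ be the capture time measured in rounds, where a round consists of one robber move followed by one cop move (so $X=n$ if the capture occurs during the $n$-th round). Then \[ \mathbb{E}[X]=\frac{1}{\frac{1}{v-1}+\frac{v-2}{v-1}\left(\frac{1}{v-1}\theta+1-\theta\right)}=\frac{(v-1)^2}{(v-1)^2-\theta(v-2)^2}. \]
   Context: Tipsy cop and drunken robber game on a finite connected graph $G$: a cop and a robber are placed at distinct vertices. Moves are numbered $1,2,3,\dots$; the robber makes the odd-numbered moves and the cop the even-numbered moves, and on each move the mover must move to a vertex adjacent to its current vertex (staying put is not allowed). The robber always moves to a neighbor chosen uniformly at random. The cop, independently at each of her moves, with probability $\theta$ moves to a neighbor chosen uniformly at random, and with probability $1-\theta$ makes a directed move to a neighbor lying on a shortest path to the robber's current vertex (in particular onto the robber's vertex if it is adjacent). All random choices are independent. The robber is captured (and the game ends) as soon as both occupy the same vertex, whether the robber moves onto the cop or the cop moves onto the robber. *)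

From HB Require Import structures.
From mathcomp Require Import all_boot all_order all_algebra.
From mathcomp Require Import all_classical all_reals all_analysis.
Set Implicit Arguments. Unset Strict Implicit. Unset Printing Implicit Defensive.
Import Order.TTheory GRing.Theory Num.Theory.
Local Open Scope ring_scope.

(* A simple graph is a (symmetric, irreflexive) relation e on a finType T. *)
Section Game.
Variable T : finType.
Variable e : rel T.

Definition nbrs (x : T) : {set T} := [set y | e x y].

Fixpoint ball (n : nat) (x : T) : {set T} :=
  if n is n'.+1 then ball n' x :|: \bigcup_(y in ball n' x) nbrs y
  else [set x].

(* graph distance (least n with y in ball n x; meaningful on connected graphs) *)
Definition gdist (x y : T) : nat := find (fun n => y \in ball n x) (iota 0 #|T|).

Definition geo_nbrs (c r : T) : {set T} :=
  [set w in nbrs c | (gdist w r).+1 == gdist c r].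

Variable R : realType.
Variable theta : R.

Definition robP (r r' : T) : R :=
  if r' \in nbrs r then (#|nbrs r|%:R)^-1 else 0.

Definition copP (c r' c' : T) : R :=
  theta * (if c' \in nbrs c then (#|nbrs c|%:R)^-1 else 0)
  + (1 - theta) * (if c' \in geo_nbrs c r' then (#|geo_nbrs c r'|%:R)^-1 else 0).

(* sub-probability mass on (cop, robber) positions for the event
   "not captured yet"; one round = robber move then cop move,
   capture occurs when both occupy the same vertex. *)
Definition round_step (m : T -> T -> R) : T -> T -> R :=
  fun c' r' =>
    if c' == r' then 0 else
    \sum_(c : T) \sum_(r : T)
       m c r * (if r' == c then 0 else robP r r') * copP c r' c'.

Definition init_mass (c0 r0 : T) : T -> T -> R :=
  fun c r => if (c == c0) && (r == r0) then 1 else 0.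

(* P(X > n): probability of no capture during the first n rounds *)
Definition survival (c0 r0 : T) (n : nat) : R :=
  \sum_(c : T) \sum_(r : T) iter n round_step (init_mass c0 r0) c r.

Definition capture_pmf (c0 r0 : T) (n : nat) : R :=
  if n is n'.+1 then survival c0 r0 n' - survival c0 r0 n else 0.

End Game.

Definition complete_rel (v : nat) : rel 'I_v := fun x y => x != y.

From HB Require Import structures.
From mathcomp Require Import all_boot all_order all_algebra.
From mathcomp Require Import all_classical all_reals all_analysis.
From mathcomp Require Import zify ring lra.

(* On K_v the directed cop steps straight onto the robber, so from every
   position without capture the next round is survived with the same
   probability q = theta ((v-2)/(v-1))^2: the robber must avoid the cop's
   vertex, and the cop must then move at random and miss the robber.  Hence
   P(X > n) = q^n, X is geometric, and E[X] = sum_n n (q^(n-1) - q^n) = 1/(1-q);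
   the denominator in the statement is 1 - q, split by whether the robber
   walks onto the cop. *)

Set Implicit Arguments.
Unset Strict Implicit.
Unset Printing Implicit Defensive.
Import Order.TTheory GRing.Theory Num.Theory numFieldNormedType.Exports.
Local Open Scope ring_scope.

Section RoundKernel.
Variables (T : finType) (e : rel T) (R : realType) (theta : R).

Definition round_kernel (c r c' r' : T) : R :=
  if c' == r' then 0 else (if r' == c then 0 else robP e R r r') * copP e theta c r' c'.

Lemma round_stepE (m : T -> T -> R) (c' r' : T) :
  round_step e theta m c' r' = \sum_c \sum_r m c r * round_kernel c r c' r'.
Proof.
rewrite /round_step /round_kernel; case: eqP => _.
  by rewrite big1 // => c _; rewrite big1 // => r _; rewrite mulr0.
by apply: eq_bigr => c _; apply: eq_bigr => r _; rewrite mulrA.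
Qed.

Lemma iter_round_step_diag (c0 r0 : T) n (c : T) : c0 != r0 ->
  iter n (round_step e theta) (init_mass R c0 r0) c c = 0.
Proof.
move=> c0r0; case: n => [|n]; last by rewrite /= /round_step eqxx.
by rewrite /= /init_mass; case: eqP => // ->; rewrite (negbTE c0r0).
Qed.

Variable q : R.
Hypothesis round_kernel_mass : forall c r, c != r -> \sum_c' \sum_r' round_kernel c r c' r' = q.

Lemma sum_round_step (m : T -> T -> R) : (forall c, m c c = 0) ->
  \sum_c' \sum_r' round_step e theta m c' r' = q * \sum_c \sum_r m c r.
Proof.
move=> m_diag.
have massE c r : m c r * q = m c r * \sum_c' \sum_r' round_kernel c r c' r'.
  by case: (eqVneq c r) => [->|/round_kernel_mass ->]; rewrite ?m_diag ?mul0r.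
under eq_bigr do under eq_bigr do rewrite round_stepE.
rewrite mulr_sumr; under [RHS]eq_bigr do rewrite mulr_sumr.
under [RHS]eq_bigr do under eq_bigr do rewrite mulrC massE mulr_sumr.
rewrite pair_big [RHS]pair_big /=.
under eq_bigr do rewrite pair_big /=.
under [RHS]eq_bigr do under eq_bigr do rewrite mulr_sumr.
under [RHS]eq_bigr do rewrite pair_big /=.
by rewrite exchange_big.
Qed.

Lemma survival_geometric (c0 r0 : T) n : c0 != r0 -> survival e theta c0 r0 n = q ^+ n.
Proof.
move=> c0r0; elim: n => [|n IH].
  rewrite /survival /= /init_mass (bigD1 c0) //= (bigD1 r0) //= !eqxx /=.
  rewrite big1 ?addr0 => [|r /negbTE -> //].
  by rewrite big1 ?addr0 // => c /negbTE cc0; apply: big1 => r _; rewrite cc0.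
rewrite /survival iterS sum_round_step -/(survival e theta c0 r0 n) ?IH ?exprS //.
by move=> c; apply: iter_round_step_diag.
Qed.

End RoundKernel.

Lemma sumr_const_neq2 (T : finType) (V : zmodType) (a b : T) (k : V) : a != b ->
  \sum_(x | (x != a) && (x != b)) k = k *+ (#|T| - 2).
Proof.
move=> ab; rewrite (eq_bigl (mem (~: [set a; b]))) => [|x]; last by rewrite !inE negb_or.
by rewrite sumr_const cardsCs finset.setCK cards2 ab.
Qed.

Section CompleteGraph.
Variables (v : nat) (R : realType) (theta : R).
Hypotheses (v_ge2 : (2 <= v)%N) (theta01 : 0 <= theta <= 1).

Local Notation K := (@complete_rel v).

Lemma nbrs_complete (x : 'I_v) : nbrs K x = [set~ x].
Proof. by apply/setP => y; rewrite !inE /complete_rel eq_sym. Qed.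

Lemma card_nbrs_complete (x : 'I_v) : #|nbrs K x| = v.-1.
Proof. by rewrite nbrs_complete cardsC1 card_ord. Qed.

Lemma gdist_complete (x y : 'I_v) : gdist K x y = (x != y).
Proof.
rewrite /gdist card_ord; case: v v_ge2 x y => [|[|v']] // _ x y /=.
rewrite inE eq_sym; case: eqP => //= /eqP yx.
suff -> : y \in [set x] :|: \bigcup_(z in [set x]) nbrs (@complete_rel _) z by [].
by rewrite big_set1 !inE /complete_rel eq_sym yx orbT.
Qed.

Lemma geo_nbrs_complete (c r : 'I_v) : c != r -> geo_nbrs K c r = [set r].
Proof.
move=> cr; apply/setP => w; rewrite !inE !gdist_complete cr /complete_rel.
by case: (eqVneq w r) => [->|] //=; rewrite ?cr ?andbF.
Qed.

Lemma robP_complete (r r' : 'I_v) :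
  robP K R r r' = if r' != r then (v.-1%:R)^-1 else 0.
Proof. by rewrite /robP card_nbrs_complete nbrs_complete !inE. Qed.

Lemma copP_complete (c r' c' : 'I_v) : c != r' ->
  copP K theta c r' c' =
  theta * (if c' != c then (v.-1%:R)^-1 else 0) + (1 - theta) * (c' == r')%:R.
Proof.
move=> cr'; rewrite /copP geo_nbrs_complete // card_nbrs_complete nbrs_complete.
by rewrite cards1 invr1 !inE; case: (c' == r').
Qed.

Definition evasion_prob : R := theta * (v.-2%:R / v.-1%:R) ^+ 2.

Lemma round_kernel_complete (c r c' r' : 'I_v) : c != r ->
  round_kernel K theta c r c' r' =
  if (r' != c) && (r' != r) then
    if (c' != r') && (c' != c) then theta / v.-1%:R ^+ 2 else 0
  else 0.
Proof.
move=> cr; rewrite /round_kernel robP_complete.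
case: (eqVneq r' c) => [->|r'c] /=; first by case: ifP; rewrite ?mul0r.
case: (eqVneq r' r) => [->|r'r] /=; first by case: ifP; rewrite ?mul0r.
case: (eqVneq c' r') => //= c'r'.
rewrite copP_complete 1?eq_sym // (negbTE c'r') mulr0 addr0.
by case: ifP => _; rewrite ?mulr0 // -exprVn; ring.
Qed.

Lemma round_kernel_mass_complete (c r : 'I_v) : c != r ->
  \sum_c' \sum_r' round_kernel K theta c r c' r' = evasion_prob.
Proof.
have sum_neq2 (a b : 'I_v) (k : R) : a != b ->
    \sum_x (if (x != a) && (x != b) then k else 0) = v.-2%:R * k.
  by move=> ab; rewrite -big_mkcond sumr_const_neq2 // card_ord subn2 mulr_natl.
move=> cr; rewrite exchange_big /=.
under eq_bigr do under eq_bigr do rewrite round_kernel_complete //.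
rewrite (eq_bigr (fun r' => if (r' != c) && (r' != r) then
  v.-2%:R * (theta / v.-1%:R ^+ 2) else 0)) => [|r' _].
  by rewrite sum_neq2 // /evasion_prob expr_div_n; ring.
by case: ifP => [/andP[r'c _]|_]; rewrite ?sum_neq2 // big1.
Qed.

Let v1E : v.-1%:R = v.-2%:R + 1 :> R.
Proof. by rewrite natr1; congr _%:R; lia. Qed.

Lemma evasion_prob_ge0_lt1 : 0 <= evasion_prob < 1.
Proof.
case/andP: theta01 => t0 t1; rewrite /evasion_prob v1E.
set p := _ / _; have p0 : 0 <= p by rewrite divr_ge0 // addr_ge0.
have p1 : p < 1 by rewrite ltr_pdivrMr ?mul1r ?ltrDl // ltr_wpDl.
apply/andP; split; first by rewrite mulr_ge0 // sqr_ge0.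
nra.
Qed.

Lemma subr_evasion_prob : 1 - evasion_prob =
  (v.-1%:R)^-1 + v.-2%:R / v.-1%:R * ((v.-1%:R)^-1 * theta + 1 - theta).
Proof. by rewrite /evasion_prob v1E; field; rewrite natr1 pnatr_eq0. Qed.

Lemma invr_subr_evasion_prob : (1 - evasion_prob)^-1 =
  v.-1%:R ^+ 2 / (v.-1%:R ^+ 2 - theta * v.-2%:R ^+ 2).
Proof.
have [t0 t1] := andP theta01.
have a0 : 0 <= v.-2%:R :> R by [].
have den_gt0 : 0 < (v.-2%:R + 1) ^+ 2 - theta * v.-2%:R ^+ 2 :> R by nra.
rewrite /evasion_prob v1E; field.
by rewrite gt_eqF //= natr1 pnatr_eq0.
Qed.

End CompleteGraph.

Local Open Scope classical_set_scope.
Local Open Scope ring_scope.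

Section GeometricMean.
Variable R : realType.

Lemma natr_mul_expr_le (r : R) n : 0 <= r < 1 -> n%:R * r ^+ n <= (1 - r)^-1.
Proof.
case/andP => r0 r1; rewrite -div1r ler_pdivlMr ?subr_gt0 //.
elim: n => [|n IH]; first by rewrite !mul0r ler01.
have rn1 : r ^+ n.+1 <= 1 by rewrite exprn_ile1 // ltW.
have -> : n.+1%:R * r ^+ n.+1 * (1 - r) =
    r * (n%:R * r ^+ n * (1 - r)) + r ^+ n.+1 * (1 - r).
  by rewrite exprS -natr1; ring.
set a := n%:R * _ * _ in IH *; set b := r ^+ n.+1 in rn1 *; nra.
Qed.

(* n q^n = (n r^n) r^n <= r^n / (1 - r) with r = sqrt q. *)
Lemma cvg_natr_mul_expr (q : R) : 0 <= q < 1 -> (fun n => n%:R * q ^+ n) @ \oo --> 0.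
Proof.
case/andP => q0 q1; set r := Num.sqrt q.
have r0 : 0 <= r by apply: sqrtr_ge0.
have r1 : r < 1 by rewrite /r -sqrtr1 ltr_sqrt.
apply: (@squeeze_cvgr _ _ _ _ (cst 0) (geometric ((1 - r)^-1) r)); last 2 first.
- exact: cvg_cst.
- by apply: cvg_geometric; rewrite ger0_norm.
apply: nearW => n /=; rewrite mulr_ge0 ?exprn_ge0 //=.
rewrite -(sqr_sqrtr q0) -/r -exprM mul2n -addnn exprD mulrA.
by rewrite ler_wpM2r ?exprn_ge0 // natr_mul_expr_le // r0.
Qed.

Lemma series_geometric_mean (q : R) n :
  series (fun k => k%:R * (if k is k'.+1 then q ^+ k' - q ^+ k else 0)) n.+1
  = series (geometric 1 q) n - n%:R * q ^+ n.
Proof.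
elim: n => [|n IH].
  by rewrite seriesSr !seriesEord /= !big_ord0 !mul0r subrr addr0.
by rewrite seriesSr IH seriesSr /= exprS -natr1; ring.
Qed.

Lemma cvg_series_geometric_mean (q : R) : 0 <= q < 1 ->
  series (fun k => k%:R * (if k is k'.+1 then q ^+ k' - q ^+ k else 0)) @ \oo
  --> (1 - q)^-1.
Proof.
move=> /andP[q0 q1]; rewrite -cvg_shiftS.
under eq_fun do rewrite /= series_geometric_mean.
have -> : (1 - q)^-1 = 1 * (1 - q)^-1 - 0 by rewrite mul1r subr0.
apply: cvgB; first by apply: cvg_geometric_series; rewrite ger0_norm.
by apply: cvg_natr_mul_expr; rewrite q0.
Qed.

End GeometricMean.

Theorem mainTheorem3 (R : realType) (v : nat) (theta : R) (c0 r0 : 'I_v) :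
  (2 <= v)%N -> 0 <= theta <= 1 -> c0 != r0 ->
  (series (fun n : nat => n%:R * capture_pmf (@complete_rel v) theta c0 r0 n)
     @ \oo --> 1 / ((v.-1%:R)^-1 + v.-2%:R / v.-1%:R * ((v.-1%:R)^-1 * theta + 1 - theta)))
  /\ 1 / ((v.-1%:R)^-1 + v.-2%:R / v.-1%:R * ((v.-1%:R)^-1 * theta + 1 - theta))
     = v.-1%:R ^+ 2 / (v.-1%:R ^+ 2 - theta * v.-2%:R ^+ 2).
Proof.
move=> v_ge2 theta01 c0r0.
rewrite -subr_evasion_prob // div1r; split; last exact: invr_subr_evasion_prob.
set q := evasion_prob v theta.
have survivalE n : survival (@complete_rel v) theta c0 r0 n = q ^+ n.
  by apply: survival_geometric => // c r; apply: round_kernel_mass_complete.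
have -> : capture_pmf (@complete_rel v) theta c0 r0 =
    fun n => if n is n'.+1 then q ^+ n' - q ^+ n else 0.
  by apply/funext => -[|n] //=; rewrite !survivalE.
exact/cvg_series_geometric_mean/evasion_prob_ge0_lt1.
Qed.
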